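(* Let $(\gamma_i)_{i=0}^{n+1}$ be a linear sequence of geodesics in $\mathbb{H}^2$, and define $u_i$ ($0\le i\le n$) and $v_i$ ($1 \le i \le n$) as in the context. Let $D = d(\gamma_0, \gamma_{n+1})$. Suppose $u_0, u_n \le 1$. Then $$\Big| \sum_{i=1}^n v_i \Big| \le D + 2\log D - \log u_0 - \log u_n + 3.$$
   Context: A linear sequence of geodesics in $\mathbb{H}^2$ is a sequence of pairwise disjoint geodesics, consecutive ones having a common orthogonal, such that each geodesic separates those before it from those after it. Each $\gamma_i$ is oriented so that the geodesics following it lie to its left. Let $\eta_i$ be the common orthogonal of $\gamma_i$ and $\gamma_{i+1}$, oriented from $\gamma_i$ to $\gamma_{i+1}$; $u_i>0$ is the length of $\eta_i$ (the distance from $\gamma_i$ to $\gamma_{i+1}$), and $v_i$ is the signed distance along $\gamma_i$ (with its orientation) from the foot of $\eta_{i-1}$ on $\gamma_i$ to the foot of $\eta_i$ on $\gamma_i$. $d(\gamma_0,\gamma_{n+1})$ is the distance between the two geodesics. *)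

(* hyperboloid model of the hyperbolic plane H^2. *)
From Stdlib Require Import Reals Lra List.
Open Scope R_scope.

Record V3 := mkV { v0 : R; v1 : R; v2 : R }.

Definition vadd (x y : V3) : V3 := mkV (v0 x + v0 y) (v1 x + v1 y) (v2 x + v2 y).
Definition vscale (r : R) (x : V3) : V3 := mkV (r * v0 x) (r * v1 x) (r * v2 x).

Definition mink (x y : V3) : R := - v0 x * v0 y + v1 x * v1 y + v2 x * v2 y.

Definition is_pt (x : V3) : Prop := mink x x = -1 /\ 0 < v0 x.

Definition acosh (y : R) : R := ln (y + sqrt (y * y - 1)).

Definition hdist (x y : V3) : R := acosh (- mink x y).

(* An oriented geodesic, given by a unit-speed (arclength) parametrization
   s |-> cosh s * p + sinh s * t, with p a point and t a unit tangent at p. *)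
Record line := mkLine { lp : V3; lt : V3 }.

Definition is_line (l : line) : Prop :=
  is_pt (lp l) /\ mink (lp l) (lt l) = 0 /\ mink (lt l) (lt l) = 1.

Definition gpos (l : line) (s : R) : V3 :=
  vadd (vscale (cosh s) (lp l)) (vscale (sinh s) (lt l)).

Definition gvel (l : line) (s : R) : V3 :=
  vadd (vscale (sinh s) (lp l)) (vscale (cosh s) (lt l)).

Definition on_line (l : line) (x : V3) : Prop := exists s, x = gpos l s.

Definition det3 (x y z : V3) : R :=
  v0 x * (v1 y * v2 z - v2 y * v1 z)
  - v1 x * (v0 y * v2 z - v2 y * v0 z)
  + v2 x * (v0 y * v1 z - v1 y * v0 z).

(* Left / right open half-planes of an oriented geodesic (orientation of H^2
   induced by the standard one on the (x1,x2)-plane); det3 (gpos l s) (gvel l s) x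
   is independent of s. *)
Definition left_of (l : line) (x : V3) : Prop := 0 < det3 (gpos l 0) (gvel l 0) x.
Definition right_of (l : line) (x : V3) : Prop := det3 (gpos l 0) (gvel l 0) x < 0.

Definition is_inf (S : R -> Prop) (D : R) : Prop :=
  (forall d, S d -> D <= d) /\ (forall m, (forall d, S d -> m <= d) -> m <= D).

Definition geod_dist (l1 l2 : line) (D : R) : Prop :=
  is_inf (fun d => exists x y, on_line l1 x /\ on_line l2 y /\ d = hdist x y) D.

Definition sum_from1 (n : nat) (v : nat -> R) : R :=
  fold_right Rplus 0 (map v (seq 1 n)).

From Stdlib Require Import Reals Lra Psatz List Lia.
Open Scope R_scope.

(* Let X be the unit normal of g 0 and, for each k, let (al k, be k, nu k) be the
   coordinates of X in the orthonormal frame (position, velocity, normal) of g k at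
   the foot of the perpendicular h k.  Crossing h k is a hyperbolic rotation by u k
   mixing al and nu, which keeps be up to a sign; the separation hypothesis forces
   the sign to be +1 except at the last crossing.  Sliding along g (k+1) by v (k+1)
   multiplies al + be and al - be by exp (v (k+1)) and exp (- v (k+1)).  Hence
   al n +- be n >= sinh (u 0) exp (+- sum v) and nu n >= 1, so after the last
   crossing the normal coordinate is at least 1 + u 0 u n exp |sum v| / 8.  That
   coordinate bounds cosh of the distance between g 0 and g (n+1) from below, and
   cosh D - 1 <= D^2 exp D / 2 turns this into the logarithmic bound. *)

Lemma exp_le x y : x <= y -> exp x <= exp y.
Proof.
  intros [Hlt | ->]; [left; apply exp_increasing; exact Hlt | right; reflexivity].
Qed.

Lemma ln_le x y : 0 < x -> x <= y -> ln x <= ln y.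
Proof.
  intros Hx [Hlt | ->]; [left; apply ln_increasing; assumption | right; reflexivity].
Qed.

Lemma cosh_sq_sub_sinh_sq x : cosh x * cosh x - sinh x * sinh x = 1.
Proof.
  unfold cosh, sinh.
  assert (E : exp x * exp (- x) = 1) by (rewrite <- exp_plus, Rplus_opp_r; apply exp_0).
  nra.
Qed.

Lemma cosh_pos x : 0 < cosh x.
Proof. unfold cosh. pose proof (exp_pos x); pose proof (exp_pos (- x)). lra. Qed.

Lemma cosh_ge_1 x : 1 <= cosh x.
Proof. pose proof (cosh_sq_sub_sinh_sq x); pose proof (cosh_pos x). nra. Qed.

Lemma sinh_pos x : 0 < x -> 0 < sinh x.
Proof. intros Hx. rewrite <- sinh_0. apply sinh_lt, Hx. Qed.

Lemma sinh_ge_half x : 0 <= x -> x / 2 <= sinh x.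
Proof.
  intros Hx. unfold sinh. rewrite exp_Ropp.
  pose proof (exp_ineq1_le x).
  assert (/ exp x <= 1) by (rewrite <- Rinv_1; apply Rinv_le_contravar; lra).
  lra.
Qed.

Lemma cosh_ge_sq x : 0 <= x -> 1 + x * x / 8 <= cosh x.
Proof.
  intros Hx.
  assert (Half : cosh x = 1 + 2 * (sinh (x / 2) * sinh (x / 2))).
  { unfold cosh, sinh.
    replace x with (x / 2 + x / 2) at 1 2 by field.
    replace (- (x / 2 + x / 2)) with (- (x / 2) + - (x / 2)) by ring.
    rewrite !exp_plus.
    assert (E : exp (x / 2) * exp (- (x / 2)) = 1)
      by (rewrite <- exp_plus, Rplus_opp_r; apply exp_0).
    nra. }
  pose proof (sinh_ge_half (x / 2)). nra.
Qed.

Lemma cosh_sub_1_le x : 0 <= x -> cosh x - 1 <= x * x * exp x / 2.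
Proof.
  intros Hx. unfold cosh. rewrite exp_Ropp.
  pose proof (exp_pos x) as Hpos.
  assert (Hinv : exp x * / exp x = 1) by (apply Rinv_r; lra).
  assert (H1 : 1 <= exp x) by (pose proof (exp_ineq1_le x); lra).
  assert (Hm : exp x - 1 <= x * exp x).
  { pose proof (exp_ineq1_le (- x)) as H. rewrite exp_Ropp in H. nra. }
  assert (Hsq : (exp x - 1) * (exp x - 1) <= (x * exp x) * (x * exp x)) by nra.
  assert (0 < / exp x) by (apply Rinv_0_lt_compat; lra).
  apply (Rmult_le_compat_l (/ exp x)) in Hsq; [nra | lra].
Qed.

Lemma add_inv_le p q : 1 <= p -> p <= q -> p + / p <= q + / q.
Proof.
  intros Hp Hpq.
  assert (Hdiff : / p - / q = (q - p) * (/ p * / q)) by (field; lra).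
  assert (Hpq1 : / p * / q <= 1).
  { rewrite <- Rinv_mult, <- Rinv_1. apply Rinv_le_contravar; nra. }
  assert (0 <= / p * / q) by (apply Rmult_le_pos; left; apply Rinv_0_lt_compat; lra).
  nra.
Qed.

Lemma cosh_le x y : 0 <= x -> x <= y -> cosh x <= cosh y.
Proof.
  intros Hx Hxy. unfold cosh. rewrite !exp_Ropp.
  pose proof (exp_ineq1_le x). pose proof (exp_le x y Hxy).
  pose proof (add_inv_le (exp x) (exp y)). lra.
Qed.

Lemma acosh_nonneg y : 1 <= y -> 0 <= acosh y.
Proof.
  intros Hy. unfold acosh. rewrite <- ln_1.
  apply ln_le; [lra|]. pose proof (sqrt_pos (y * y - 1)). lra.
Qed.

Lemma acosh_le p q : 1 <= p -> p <= q -> acosh p <= acosh q.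
Proof.
  intros Hp Hpq. unfold acosh.
  assert (sqrt (p * p - 1) <= sqrt (q * q - 1)) by (apply sqrt_le_1_alt; nra).
  apply ln_le; [pose proof (sqrt_pos (p * p - 1)); lra | lra].
Qed.

Lemma cosh_acosh y : 1 <= y -> cosh (acosh y) = y.
Proof.
  intros Hy. unfold cosh, acosh.
  set (r := sqrt (y * y - 1)).
  assert (Hr : r * r = y * y - 1) by (apply sqrt_sqrt; nra).
  assert (0 <= r) by apply sqrt_pos.
  rewrite exp_Ropp, exp_ln by lra.
  assert (/ (y + r) = y - r) by (apply Rmult_eq_reg_l with (y + r); [rewrite Rinv_r; nra | lra]).
  lra.
Qed.

Lemma le_cosh_of_acosh_le y D : 1 <= y -> acosh y <= D -> y <= cosh D.
Proof.
  intros Hy HD. rewrite <- (cosh_acosh y Hy).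
  apply cosh_le; [apply acosh_nonneg|]; assumption.
Qed.

Lemma distance_estimate u0 un S D : 0 < u0 -> 0 < un ->
  acosh (1 + u0 * un / 8 * exp (Rabs S)) <= D ->
  Rabs S <= D + 2 * ln D - ln u0 - ln un + 3.
Proof.
  intros Hu0 Hun HD.
  set (K := u0 * un / 8 * exp (Rabs S)) in HD.
  assert (HK : 0 < K).
  { unfold K. apply Rmult_lt_0_compat; [|apply exp_pos].
    pose proof (Rmult_lt_0_compat u0 un Hu0 Hun). lra. }
  assert (HD0 : 0 <= D) by (pose proof (acosh_nonneg (1 + K)); lra).
  pose proof (le_cosh_of_acosh_le (1 + K) D ltac:(lra) HD) as HcD.
  pose proof (cosh_sub_1_le D HD0) as Hsub.
  pose proof (exp_pos D).
  assert (HDpos : 0 < D) by (destruct HD0 as [|<-]; [assumption | nra]).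
  assert (Hmain : u0 * un * exp (Rabs S) <= 4 * (D * D) * exp D) by (unfold K in *; lra).
  apply ln_le in Hmain; [| apply Rmult_lt_0_compat; [nra | apply exp_pos]].
  assert (Hln4 : ln 4 <= 3).
  { rewrite <- (ln_exp 3). apply ln_le; [lra|].
    pose proof (exp_ineq1_le 3). lra. }
  rewrite !ln_mult, !ln_exp in Hmain by (try apply exp_pos; nra).
  lra.
Qed.

Lemma gpos_0 l : gpos l 0 = lp l.
Proof.
  unfold gpos, vadd, vscale. rewrite cosh_0, sinh_0.
  destruct (lp l); simpl. f_equal; ring.
Qed.

Lemma gvel_0 l : gvel l 0 = lt l.
Proof.
  unfold gvel, vadd, vscale. rewrite cosh_0, sinh_0.
  destruct (lt l); simpl. f_equal; ring.
Qed.

(* The Minkowski cross product of [lp l] and [lt l]: the unit normal of [l],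
   oriented so that [left_of l] is the half-space [0 < mink (nrm l) _]. *)
Definition nrm (l : line) : V3 :=
  let p := lp l in let t := lt l in
  mkV (- (v1 p * v2 t - v2 p * v1 t)) (v2 p * v0 t - v0 p * v2 t) (v0 p * v1 t - v1 p * v0 t).

Ltac expand_mink := unfold mink, det3, nrm, gpos, gvel, vadd, vscale; cbn [v0 v1 v2].

Lemma mink_sym x y : mink x y = mink y x.
Proof. unfold mink; ring. Qed.

Lemma mink_combl c x d y z :
  mink (vadd (vscale c x) (vscale d y)) z = c * mink x z + d * mink y z.
Proof. expand_mink. ring. Qed.

Lemma mink_combr c x d y z :
  mink z (vadd (vscale c x) (vscale d y)) = c * mink z x + d * mink z y.
Proof. expand_mink. ring. Qed.

Lemma mink_scalel c x y : mink (vscale c x) y = c * mink x y.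
Proof. expand_mink. ring. Qed.

Lemma mink_scaler c x y : mink x (vscale c y) = c * mink x y.
Proof. expand_mink. ring. Qed.

(* The orthogonal complement of a timelike vector is positive definite. *)
Lemma null_orth_timelike A z : mink A A = -1 -> mink z A = 0 -> mink z z = 0 ->
  z = mkV 0 0 0.
Proof.
  destruct A as [a0 a1 a2], z as [z0 z1 z2]; unfold mink; simpl; intros HA HzA Hz.
  assert (CS : (z1 * a1 + z2 * a2) ^ 2 <= (z1 * z1 + z2 * z2) * (a1 * a1 + a2 * a2))
    by (pose proof (pow2_ge_0 (z1 * a2 - z2 * a1)); nra).
  replace (z1 * a1 + z2 * a2) with (z0 * a0) in CS by lra.
  replace (z1 * z1 + z2 * z2) with (z0 * z0) in CS by lra.
  assert (z0 * z0 <= 0) by nra.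
  assert (z0 = 0) by nra. subst.
  assert (z1 = 0) by nra. assert (z2 = 0) by nra. subst. reflexivity.
Qed.

Lemma unit_orth_timelike_eq A x y : mink A A = -1 -> mink x A = 0 -> mink y A = 0 ->
  mink x x = 1 -> mink y y = 1 -> mink x y = 1 -> x = y.
Proof.
  intros HA HxA HyA Hxx Hyy Hxy.
  assert (Z : mkV (v0 x - v0 y) (v1 x - v1 y) (v2 x - v2 y) = mkV 0 0 0).
  { apply (null_orth_timelike A); revert HA HxA HyA Hxx Hyy Hxy; unfold mink; simpl;
      intros; nra. }
  destruct x, y; simpl in Z; injection Z; intros.
  f_equal; lra.
Qed.

Lemma mink_upper_neg x y : 0 < v0 x -> 0 < v0 y -> mink x x = -1 -> mink y y = -1 ->
  0 < - mink x y.
Proof.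
  destruct x as [x0 x1 x2], y as [y0 y1 y2]; unfold mink; simpl; intros.
  assert (CS : (x1 * y1 + x2 * y2) ^ 2 <= (x1 * x1 + x2 * x2) * (y1 * y1 + y2 * y2))
    by (pose proof (pow2_ge_0 (x1 * y2 - x2 * y1)); nra).
  assert (0 < x0 * y0) by nra. nra.
Qed.

Lemma mink_gpos_add_gvel X l s :
  mink X (gpos l s) + mink X (gvel l s) = exp s * (mink X (lp l) + mink X (lt l)).
Proof. expand_mink. unfold cosh, sinh. field. Qed.

Lemma mink_gpos_sub_gvel X l s :
  mink X (gpos l s) - mink X (gvel l s) = exp (- s) * (mink X (lp l) - mink X (lt l)).
Proof. expand_mink. unfold cosh, sinh. field. Qed.

Lemma mink_light_shift X l s s' :
  mink X (gpos l s') + mink X (gvel l s') =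
    exp (s' - s) * (mink X (gpos l s) + mink X (gvel l s)) /\
  mink X (gpos l s') - mink X (gvel l s') =
    exp (- (s' - s)) * (mink X (gpos l s) - mink X (gvel l s)).
Proof.
  rewrite !mink_gpos_add_gvel, !mink_gpos_sub_gvel.
  replace s' with ((s' - s) + s) at 1 3 by ring.
  rewrite Ropp_plus_distr, !exp_plus. split; ring.
Qed.

Lemma mink_gpos_sq_ge X l s t :
  mink X (gpos l s) ^ 2 - mink X (gvel l s) ^ 2 <= mink X (gpos l t) ^ 2.
Proof.
  assert (Inv : forall r, mink X (gpos l r) ^ 2 - mink X (gvel l r) ^ 2 =
    (mink X (lp l) + mink X (lt l)) * (mink X (lp l) - mink X (lt l))).
  { intros r.
    replace (mink X (gpos l r) ^ 2 - mink X (gvel l r) ^ 2) with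
      ((mink X (gpos l r) + mink X (gvel l r)) * (mink X (gpos l r) - mink X (gvel l r)))
      by ring.
    rewrite mink_gpos_add_gvel, mink_gpos_sub_gvel, exp_Ropp.
    field. apply Rgt_not_eq, exp_pos. }
  rewrite Inv, <- (Inv t). pose proof (pow2_ge_0 (mink X (gvel l t))). lra.
Qed.

Section LineFrame.
Variable l : line.
Hypothesis Hl : is_line l.

Lemma mink_gpos_gpos s : mink (gpos l s) (gpos l s) = -1.
Proof.
  destruct Hl as [[Hp _] [Hpt Htt]].
  transitivity (cosh s * cosh s * mink (lp l) (lp l) + 2 * cosh s * sinh s * mink (lp l) (lt l)
    + sinh s * sinh s * mink (lt l) (lt l)); [expand_mink; ring|].
  rewrite Hp, Hpt, Htt. pose proof (cosh_sq_sub_sinh_sq s). lra.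
Qed.

Lemma mink_gpos_gvel s : mink (gpos l s) (gvel l s) = 0.
Proof.
  destruct Hl as [[Hp _] [Hpt Htt]].
  transitivity (cosh s * sinh s * (mink (lp l) (lp l) + mink (lt l) (lt l))
    + (cosh s * cosh s + sinh s * sinh s) * mink (lp l) (lt l)); [expand_mink; ring|].
  rewrite Hp, Hpt, Htt. ring.
Qed.

Lemma mink_gvel_gvel s : mink (gvel l s) (gvel l s) = 1.
Proof.
  destruct Hl as [[Hp _] [Hpt Htt]].
  transitivity (sinh s * sinh s * mink (lp l) (lp l) + 2 * cosh s * sinh s * mink (lp l) (lt l)
    + cosh s * cosh s * mink (lt l) (lt l)); [expand_mink; ring|].
  rewrite Hp, Hpt, Htt. pose proof (cosh_sq_sub_sinh_sq s). lra.
Qed.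

Lemma det3_gpos_gvel s y : det3 (gpos l s) (gvel l s) y = mink (nrm l) y.
Proof.
  transitivity ((cosh s * cosh s - sinh s * sinh s) * mink (nrm l) y); [expand_mink; ring|].
  rewrite cosh_sq_sub_sinh_sq. ring.
Qed.

Lemma mink_nrm_gpos s : mink (nrm l) (gpos l s) = 0.
Proof. rewrite <- (det3_gpos_gvel s). expand_mink. ring. Qed.

Lemma mink_nrm_gvel s : mink (nrm l) (gvel l s) = 0.
Proof. rewrite <- (det3_gpos_gvel s). expand_mink. ring. Qed.

Lemma mink_nrm_nrm : mink (nrm l) (nrm l) = 1.
Proof.
  destruct Hl as [[Hp _] [Hpt Htt]].
  transitivity (mink (lp l) (lt l) * mink (lp l) (lt l) - mink (lp l) (lp l) * mink (lt l) (lt l));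
    [expand_mink; ring|].
  rewrite Hp, Hpt, Htt. ring.
Qed.

Lemma mink_frame_decomp s y :
  mink (gpos l s) y ^ 2 - mink (gvel l s) y ^ 2 - mink (nrm l) y ^ 2 = - mink y y.
Proof.
  (* [- (det3 P V y)^2] is the Gram determinant of [P, V, y] for the Minkowski form. *)
  assert (Gram : forall P V, - (det3 P V y) ^ 2 =
    mink P P * (mink V V * mink y y - mink V y * mink V y)
    - mink P V * (mink P V * mink y y - mink V y * mink P y)
    + mink P y * (mink P V * mink V y - mink V V * mink P y))
    by (intros; unfold mink, det3; ring).
  specialize (Gram (gpos l s) (gvel l s)).
  rewrite det3_gpos_gvel, mink_gpos_gpos, mink_gpos_gvel, mink_gvel_gvel in Gram.
  rewrite (mink_sym (nrm l)) in *. nra.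
Qed.

Lemma gpos_upper s : 0 < v0 (gpos l s).
Proof.
  destruct Hl as [[Hp Hp0] [Hpt Htt]]. unfold gpos, vadd, vscale; simpl.
  destruct (lp l) as [p0 p1 p2], (lt l) as [t0 t1 t2]; unfold mink in *; simpl in *.
  pose proof (cosh_sq_sub_sinh_sq s). pose proof (cosh_pos s).
  assert (CS : (p1 * t1 + p2 * t2) ^ 2 <= (p1 * p1 + p2 * p2) * (t1 * t1 + t2 * t2))
    by (pose proof (pow2_ge_0 (p1 * t2 - p2 * t1)); nra).
  replace (p1 * t1 + p2 * t2) with (p0 * t0) in CS by lra.
  replace (p1 * p1 + p2 * p2) with (p0 * p0 - 1) in CS by lra.
  replace (t1 * t1 + t2 * t2) with (1 + t0 * t0) in CS by lra.
  assert (t0 * t0 <= p0 * p0 - 1) by nra.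
  assert ((sinh s * t0) * (sinh s * t0) < (cosh s * p0) * (cosh s * p0)) by nra.
  assert (0 < cosh s * p0) by nra.
  nra.
Qed.

End LineFrame.

Lemma left_of_iff l x : left_of l x <-> 0 < mink (nrm l) x.
Proof. unfold left_of. rewrite det3_gpos_gvel. reflexivity. Qed.

Lemma right_of_iff l x : right_of l x <-> mink (nrm l) x < 0.
Proof. unfold right_of. rewrite det3_gpos_gvel. reflexivity. Qed.

Lemma acosh_le_hdist_line (l0 l1 : line) M : is_line l0 -> is_line l1 -> 1 <= M ->
  (forall t, M * M - 1 <= mink (nrm l0) (gpos l1 t) ^ 2) ->
  forall x y, on_line l0 x -> on_line l1 y -> acosh M <= hdist x y.
Proof.
  intros H0 H1 HM HX x y [s ->] [t ->].
  pose proof (mink_frame_decomp l0 H0 s (gpos l1 t)) as F.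
  rewrite (mink_gpos_gpos l1 H1) in F.
  pose proof (mink_upper_neg (gpos l0 s) (gpos l1 t) (gpos_upper l0 H0 s) (gpos_upper l1 H1 t)
    (mink_gpos_gpos l0 H0 s) (mink_gpos_gpos l1 H1 t)).
  specialize (HX t). pose proof (pow2_ge_0 (mink (gvel l0 s) (gpos l1 t))).
  unfold hdist. apply acosh_le; nra.
Qed.

Lemma common_perp_tangent (l h : line) s t : is_line l -> is_line h -> 0 < t ->
  gpos h 0 = gpos l s -> mink (gvel h 0) (gvel l s) = 0 -> left_of l (gpos h t) ->
  lt h = nrm l.
Proof.
  intros Hl Hh Ht E0 O0 Hleft.
  rewrite gpos_0 in E0. rewrite gvel_0 in O0.
  destruct Hh as [_ [Hpw Hww]]. rewrite E0 in Hpw.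
  assert (Nw : 0 < mink (nrm l) (lt h)).
  { apply left_of_iff in Hleft. unfold gpos in Hleft.
    rewrite E0, mink_combr, (mink_nrm_gpos l) in Hleft.
    pose proof (sinh_pos t Ht). nra. }
  pose proof (mink_frame_decomp l Hl s (lt h)) as F.
  rewrite Hpw, (mink_sym (gvel l s)), O0, Hww in F.
  apply (unit_orth_timelike_eq (gpos l s)).
  - apply (mink_gpos_gpos l Hl).
  - rewrite mink_sym. exact Hpw.
  - apply mink_nrm_gpos.
  - exact Hww.
  - apply (mink_nrm_nrm l Hl).
  - rewrite mink_sym. nra.
Qed.

Lemma perp_landing_gvel (l l' : line) r r' t : is_line l -> is_line l' ->
  gpos l' r' = vadd (vscale (cosh t) (gpos l r)) (vscale (sinh t) (nrm l)) ->
  mink (vadd (vscale (sinh t) (gpos l r)) (vscale (cosh t) (nrm l))) (gvel l' r') = 0 ->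
  exists sg, sg * sg = 1 /\ gvel l' r' = vscale sg (gvel l r).
Proof.
  intros Hl Hl' EA OW.
  pose proof (cosh_sq_sub_sinh_sq t) as Hcs. pose proof (cosh_pos t) as Hc.
  pose proof (mink_gpos_gvel l Hl r) as PT. pose proof (mink_gvel_gvel l Hl r) as TT.
  pose proof (mink_nrm_gvel l r) as NT.
  assert (AA := mink_gpos_gpos l' Hl' r'). assert (ATA := mink_gpos_gvel l' Hl' r').
  assert (TATA := mink_gvel_gvel l' Hl' r').
  set (P := gpos l r) in *. set (T := gvel l r) in *. set (N := nrm l) in *.
  set (c := cosh t) in *. set (s := sinh t) in *. set (TA := gvel l' r') in *.
  rewrite EA in AA, ATA.
  assert (ATA' := ATA). rewrite mink_combl in ATA', OW.
  assert (PTA : mink P TA = 0).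
  { rewrite <- (Rmult_1_l (mink P TA)), <- Hcs.
    replace ((c * c - s * s) * mink P TA) with
      (c * (c * mink P TA + s * mink N TA) - s * (s * mink P TA + c * mink N TA)) by ring.
    rewrite ATA', OW. ring. }
  assert (NTA : mink N TA = 0).
  { rewrite PTA, Rmult_0_r, Rplus_0_l in OW.
    apply Rmult_integral in OW as [|]; [lra | assumption]. }
  pose proof (mink_frame_decomp l Hl r TA) as F. fold P T N in F.
  rewrite PTA, NTA, TATA in F.
  exists (mink T TA).
  assert (Hsg : mink T TA * mink T TA = 1) by nra.
  split; [exact Hsg|].
  apply (unit_orth_timelike_eq (vadd (vscale c P) (vscale s N))).
  - exact AA.
  - rewrite mink_sym. exact ATA.
  - rewrite mink_scalel, mink_combr, (mink_sym T P), (mink_sym T N), PT, NT. ring.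
  - exact TATA.
  - rewrite mink_scalel, mink_scaler, TT. lra.
  - rewrite mink_scaler, (mink_sym TA T). exact Hsg.
Qed.

Lemma perp_landing_nrm (l l' : line) r r' t sg : is_line l -> is_line l' -> sg * sg = 1 ->
  gpos l' r' = vadd (vscale (cosh t) (gpos l r)) (vscale (sinh t) (nrm l)) ->
  gvel l' r' = vscale sg (gvel l r) ->
  nrm l' = vscale sg (vadd (vscale (sinh t) (gpos l r)) (vscale (cosh t) (nrm l))).
Proof.
  intros Hl Hl' Hsg EA ET.
  pose proof (cosh_sq_sub_sinh_sq t) as Hcs.
  pose proof (mink_gpos_gpos l Hl r) as PP. pose proof (mink_nrm_nrm l Hl) as NN.
  pose proof (mink_nrm_gpos l r) as NP.
  assert (AA := mink_gpos_gpos l' Hl' r'). assert (AN' := mink_nrm_gpos l' r').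
  assert (N'N' := mink_nrm_nrm l' Hl').
  set (P := gpos l r) in *. set (N := nrm l) in *.
  set (c := cosh t) in *. set (s := sinh t) in *.
  set (W := vadd (vscale s P) (vscale c N)).
  assert (N'W := det3_gpos_gvel l' r' W).
  rewrite EA in AA, AN', N'W. rewrite ET in N'W.
  apply (unit_orth_timelike_eq (vadd (vscale c P) (vscale s N))).
  - exact AA.
  - exact AN'.
  - unfold W. rewrite mink_scalel, mink_combl, !mink_combr, (mink_sym P N), NP, PP, NN. ring.
  - exact N'N'.
  - unfold W. rewrite mink_scalel, mink_scaler, mink_combl, !mink_combr, (mink_sym P N), NP, PP, NN.
    nra.
  - assert (Rot : forall X Y Z, det3 (vadd (vscale c X) (vscale s Y)) (vscale sg Z)
      (vadd (vscale s X) (vscale c Y)) = sg * (c * c - s * s) * det3 X Z Y)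
      by (intros; expand_mink; ring).
    rewrite mink_scaler, <- N'W. unfold W. rewrite Rot, Hcs.
    unfold P. rewrite (det3_gpos_gvel l). fold N. rewrite NN. nra.
Qed.

Lemma perp_landing_sign (l l' : line) r t sg : is_line l -> 0 < t -> sg * sg = 1 ->
  nrm l' = vscale sg (vadd (vscale (sinh t) (gpos l r)) (vscale (cosh t) (nrm l))) ->
  right_of l' (gpos l r) -> sg = 1.
Proof.
  intros Hl Ht Hsg EN Hr. apply right_of_iff in Hr.
  rewrite EN, mink_scalel, mink_combl, (mink_gpos_gpos l Hl), (mink_nrm_gpos l) in Hr.
  pose proof (sinh_pos t Ht). nra.
Qed.

Lemma sum_from1_S k v : sum_from1 (S k) v = sum_from1 k v + v (S k).
Proof.
  unfold sum_from1. rewrite seq_S, map_app, fold_right_app. simpl.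
  replace (1 + k)%nat with (S k) by lia.
  generalize (map v (seq 1 k)). intros xs.
  induction xs as [|x xs IH]; simpl; [ring | rewrite IH; ring].
Qed.

Lemma light_bounds_step s0 S w al be nu c s :
  0 < s0 -> 1 <= c -> 0 < s -> 1 <= nu ->
  s0 * exp S <= al + be -> s0 * exp (- S) <= al - be ->
  s0 * exp (S + w) <= exp w * (c * al + s * nu + be) /\
  s0 * exp (- (S + w)) <= exp (- w) * (c * al + s * nu - be) /\
  1 <= s * al + c * nu.
Proof.
  intros Hs0 Hc Hs Hnu Hp Hm.
  pose proof (exp_pos S). pose proof (exp_pos (- S)).
  assert (Hal : 0 <= al) by nra.
  assert (Hgain : al <= c * al + s * nu) by nra.
  rewrite Ropp_plus_distr, !exp_plus.
  split; [|split].
  - replace (s0 * (exp S * exp w)) with (exp w * (s0 * exp S)) by ring.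
    apply Rmult_le_compat_l; [left; apply exp_pos | lra].
  - replace (s0 * (exp (- S) * exp (- w))) with (exp (- w) * (s0 * exp (- S))) by ring.
    apply Rmult_le_compat_l; [left; apply exp_pos | lra].
  - nra.
Qed.

Lemma growth_of_light_bounds u0 uk S al be nu :
  0 < u0 -> 0 < uk -> 1 <= nu ->
  sinh u0 * exp S <= al + be -> sinh u0 * exp (- S) <= al - be ->
  Rabs be <= al /\ 1 + u0 * uk / 8 * exp (Rabs S) <= sinh uk * al + cosh uk * nu.
Proof.
  intros Hu0 Huk Hnu Hp Hm.
  pose proof (sinh_ge_half u0 (Rlt_le _ _ Hu0)). pose proof (sinh_ge_half uk (Rlt_le _ _ Huk)).
  pose proof (exp_pos S). pose proof (exp_pos (- S)). pose proof (cosh_ge_1 uk).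
  assert (Habs : exp (Rabs S) <= exp S + exp (- S)) by (unfold Rabs; destruct (Rcase_abs S); lra).
  assert (Hal : sinh u0 * exp (Rabs S) <= 2 * al) by nra.
  split; [apply Rabs_le; nra|].
  assert (u0 * exp (Rabs S) <= 4 * al) by nra.
  assert (0 <= al) by (pose proof (exp_pos (Rabs S)); nra).
  assert (uk / 2 * al <= sinh uk * al) by nra.
  assert (1 <= cosh uk * nu) by nra.
  assert (u0 * uk / 8 * exp (Rabs S) <= uk / 2 * al) by nra.
  lra.
Qed.

Section LinearSequence.
Variables (n : nat) (g h : nat -> line) (a b u : nat -> R).
Hypothesis Hg : forall i, (i <= n + 1)%nat -> is_line (g i).
Hypothesis Hleft : forall i k, (i < k)%nat -> (k <= n + 1)%nat ->
  forall x, on_line (g k) x -> left_of (g i) x.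
Hypothesis Hsep : forall j i, (j < i)%nat -> (i <= n)%nat ->
  forall x, on_line (g j) x -> right_of (g i) x.
Hypothesis Heta : forall i, (i <= n)%nat ->
  is_line (h i) /\ 0 < u i /\
  gpos (h i) 0 = gpos (g i) (a i) /\
  gpos (h i) (u i) = gpos (g (S i)) (b i) /\
  mink (gvel (h i) 0) (gvel (g i) (a i)) = 0 /\
  mink (gvel (h i) (u i)) (gvel (g (S i)) (b i)) = 0.

Let X := nrm (g 0%nat).
Let al k := mink X (gpos (g k) (a k)).
Let be k := mink X (gvel (g k) (a k)).
Let nu k := mink X (nrm (g k)).
Let v i := a i - b (i - 1)%nat.

Lemma turn_coords k : (k <= n)%nat ->
  exists sg, sg * sg = 1 /\ ((S k <= n)%nat -> sg = 1) /\
    mink X (gpos (g (S k)) (b k)) = cosh (u k) * al k + sinh (u k) * nu k /\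
    mink X (gvel (g (S k)) (b k)) = sg * be k /\
    nu (S k) = sg * (sinh (u k) * al k + cosh (u k) * nu k).
Proof.
  intros Hk. destruct (Heta k Hk) as (Hh & Hu & E0 & Eu & O0 & Ou).
  assert (Hgk : is_line (g k)) by (apply Hg; lia).
  assert (Hgk1 : is_line (g (S k))) by (apply Hg; lia).
  assert (Hw : lt (h k) = nrm (g k)).
  { apply (common_perp_tangent (g k) (h k) (a k) (u k)); try assumption.
    rewrite Eu. apply (Hleft k (S k)); [lia | lia | exists (b k); reflexivity]. }
  assert (Hp : lp (h k) = gpos (g k) (a k)) by (rewrite <- gpos_0; exact E0).
  assert (EA : gpos (g (S k)) (b k) =
    vadd (vscale (cosh (u k)) (gpos (g k) (a k))) (vscale (sinh (u k)) (nrm (g k)))).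
  { rewrite <- Eu. unfold gpos at 1. rewrite Hp, Hw. reflexivity. }
  assert (EW : gvel (h k) (u k) =
    vadd (vscale (sinh (u k)) (gpos (g k) (a k))) (vscale (cosh (u k)) (nrm (g k)))).
  { unfold gvel. rewrite Hp, Hw. reflexivity. }
  rewrite EW in Ou.
  destruct (perp_landing_gvel (g k) (g (S k)) (a k) (b k) (u k) Hgk Hgk1 EA Ou)
    as (sg & Hsg & ET).
  pose proof (perp_landing_nrm (g k) (g (S k)) (a k) (b k) (u k) sg Hgk Hgk1 Hsg EA ET) as EN.
  exists sg. split; [exact Hsg|]. split; [|split; [|split]].
  - intros HSk. apply (perp_landing_sign (g k) (g (S k)) (a k) (u k) sg); try assumption.
    apply (Hsep k (S k)); [lia | exact HSk | exists (a k); reflexivity].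
  - rewrite EA, mink_combr. reflexivity.
  - rewrite ET, mink_scaler. reflexivity.
  - unfold nu. rewrite EN, mink_scaler, mink_combr. reflexivity.
Qed.

Lemma coords_base : al 0%nat = 0 /\ be 0%nat = 0 /\ nu 0%nat = 1.
Proof.
  assert (Hg0 : is_line (g 0%nat)) by (apply Hg; lia).
  split; [|split]; [apply mink_nrm_gpos | apply mink_nrm_gvel | apply (mink_nrm_nrm _ Hg0)].
Qed.

Lemma coords_succ k : (S k <= n)%nat ->
  al (S k) + be (S k) = exp (v (S k)) * (cosh (u k) * al k + sinh (u k) * nu k + be k) /\
  al (S k) - be (S k) = exp (- v (S k)) * (cosh (u k) * al k + sinh (u k) * nu k - be k) /\
  nu (S k) = sinh (u k) * al k + cosh (u k) * nu k.
Proof.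
  intros Hk. destruct (turn_coords k) as (sg & _ & Hsg1 & Ep & Eq & En); [lia|].
  rewrite (Hsg1 Hk), Rmult_1_l in Eq, En.
  destruct (mink_light_shift X (g (S k)) (b k) (a (S k))) as [Hp Hm].
  rewrite Ep, Eq in Hp, Hm.
  replace (v (S k)) with (a (S k) - b k) by (unfold v; rewrite Nat.sub_succ, Nat.sub_0_r; reflexivity).
  split; [exact Hp | split; [exact Hm | exact En]].
Qed.

Lemma coords_light_bounds k : (1 <= k <= n)%nat ->
  sinh (u 0%nat) * exp (sum_from1 k v) <= al k + be k /\
  sinh (u 0%nat) * exp (- sum_from1 k v) <= al k - be k /\
  1 <= nu k.
Proof.
  induction k as [|k IH]; intros Hk; [lia|].
  destruct (coords_succ k) as (Hp & Hm & Hn); [lia|].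
  rewrite sum_from1_S, Hp, Hm, Hn.
  destruct (Heta 0%nat) as (_ & Hu0 & _); [lia|].
  destruct (Heta k) as (_ & Hu & _); [lia|].
  pose proof (sinh_pos _ Hu0). pose proof (sinh_pos _ Hu). pose proof (cosh_ge_1 (u k)).
  destruct k as [|k].
  - destruct coords_base as (A0 & B0 & N0). rewrite A0, B0, N0.
    unfold sum_from1; simpl. rewrite Rplus_0_l.
    split; [|split]; lra.
  - apply light_bounds_step; try apply IH; lia || lra.
Qed.

Lemma coords_growth k : (k <= n)%nat ->
  Rabs (be k) <= al k /\ 1 <= nu k /\
  1 + u 0%nat * u k / 8 * exp (Rabs (sum_from1 k v)) <= sinh (u k) * al k + cosh (u k) * nu k.
Proof.
  intros Hk. destruct (Heta 0%nat) as (_ & Hu0 & _); [lia|].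
  destruct (Heta k) as (_ & Hu & _); [lia|].
  destruct k as [|k].
  - destruct coords_base as (A0 & B0 & N0). rewrite A0, B0, N0.
    unfold sum_from1; simpl. rewrite Rabs_R0, exp_0.
    pose proof (cosh_ge_sq (u 0%nat) (Rlt_le _ _ Hu0)).
    split; [|split]; lra.
  - destruct (coords_light_bounds (S k)) as (Hp & Hm & Hn); [lia|].
    destruct (growth_of_light_bounds (u 0%nat) (u (S k)) (sum_from1 (S k) v) (al (S k))
      (be (S k)) (nu (S k))) as [Hbe Hgrow]; try assumption.
    split; [|split]; assumption.
Qed.

Lemma dist_ge_acosh_sum D : geod_dist (g 0%nat) (g (n + 1)%nat) D ->
  acosh (1 + u 0%nat * u n / 8 * exp (Rabs (sum_from1 n v))) <= D.
Proof.
  intros [_ Hglb].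
  destruct (coords_growth n) as (Hbe & Hnu & Hgrow); [lia|].
  destruct (turn_coords n) as (sg & Hsg & _ & Ep & Eq & _); [lia|].
  destruct (Heta 0%nat) as (_ & Hu0 & _); [lia|].
  destruct (Heta n) as (_ & Hun & _); [lia|].
  assert (Hg0 : is_line (g 0%nat)) by (apply Hg; lia).
  assert (Hgn : is_line (g n)) by (apply Hg; lia).
  assert (Hgn1 : is_line (g (S n))) by (apply Hg; lia).
  pose proof (cosh_sq_sub_sinh_sq (u n)). pose proof (cosh_ge_1 (u n)).
  pose proof (sinh_pos _ Hun). pose proof (Rabs_pos (be n)).
  assert (HK : 0 <= u 0%nat * u n / 8 * exp (Rabs (sum_from1 n v))).
  { pose proof (exp_pos (Rabs (sum_from1 n v))). pose proof (Rmult_lt_0_compat _ _ Hu0 Hun). nra. }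
  eapply Rle_trans; [apply acosh_le; [lra | exact Hgrow]|].
  apply Hglb. intros d (x & y & Hx & Hy & ->).
  rewrite Nat.add_1_r in Hy.
  apply (acosh_le_hdist_line (g 0%nat) (g (S n))); try assumption; [nra|].
  intros t. eapply Rle_trans; [|apply (mink_gpos_sq_ge X (g (S n)) (b n) t)].
  pose proof (mink_frame_decomp (g n) Hgn (a n) X) as F.
  assert (XX : mink X X = 1) by apply (mink_nrm_nrm _ Hg0).
  rewrite (mink_sym (gpos _ _)), (mink_sym (gvel _ _)), (mink_sym (nrm (g n))), XX in F.
  change (al n ^ 2 - be n ^ 2 - nu n ^ 2 = -1) in F.
  rewrite Ep, Eq. nra.
Qed.

End LinearSequence.

Theorem lemmaA13 (n : nat) (g : nat -> line) (h : nat -> line)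
  (a b u : nat -> R) (D : R)
  (Hg : forall i, (i <= n + 1)%nat -> is_line (g i))
  (Hdisj : forall i j, (i <= n + 1)%nat -> (j <= n + 1)%nat -> i <> j ->
     forall x, on_line (g i) x -> ~ on_line (g j) x)
  (Hleft : forall i k, (i < k)%nat -> (k <= n + 1)%nat ->
     forall x, on_line (g k) x -> left_of (g i) x)
  (Hsep : forall j i, (j < i)%nat -> (i <= n)%nat ->
     forall x, on_line (g j) x -> right_of (g i) x)
  (Heta : forall i, (i <= n)%nat ->
     is_line (h i) /\ 0 < u i /\
     gpos (h i) 0 = gpos (g i) (a i) /\
     gpos (h i) (u i) = gpos (g (S i)) (b i) /\
     mink (gvel (h i) 0) (gvel (g i) (a i)) = 0 /\
     mink (gvel (h i) (u i)) (gvel (g (S i)) (b i)) = 0)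
  (HD : geod_dist (g 0%nat) (g (n + 1)%nat) D)
  (Hu0 : u 0%nat <= 1) (Hun : u n <= 1) :
  Rabs (sum_from1 n (fun i => a i - b (i - 1)%nat))
    <= D + 2 * ln D - ln (u 0%nat) - ln (u n) + 3.
Proof.
  destruct (Heta 0%nat) as (_ & Hu0p & _); [lia|].
  destruct (Heta n) as (_ & Hunp & _); [lia|].
  apply distance_estimate; [exact Hu0p | exact Hunp |].
  eapply dist_ge_acosh_sum; eassumption.
Qed.
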